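(* The categories $\sigma\ell\mathbb{G}$ and $\mathcal{V}_{\sigma\ell\mathbb{G}}$ are isomorphic. More precisely: (i) for every $G\in\mathcal{V}_{\sigma\ell\mathbb{G}}$, the reduct of $G$ to the $\ell$-group operations is a Dedekind $\sigma$-complete $\ell$-group, and every morphism of $\mathcal{V}_{\sigma\ell\mathbb{G}}$ is a $\sigma$-continuous $\ell$-morphism between these reducts; (ii) for every Dedekind $\sigma$-complete $\ell$-group $G$, setting $\bigvee^-(g,f_1,f_2,\dots):=\sup_{n\ge1}\{f_n\wedge g\}$ makes $G$ an object of $\mathcal{V}_{\sigma\ell\mathbb{G}}$, and every $\sigma$-continuous $\ell$-morphism is a morphism of $\mathcal{V}_{\sigma\ell\mathbb{G}}$ for these structures; (iii) the functor $U\colon\mathcal{V}_{\sigma\ell\mathbb{G}}\to\sigma\ell\mathbb{G}$ (forget $\bigvee^-$, identity on maps) and the functor $F\colon\sigma\ell\mathbb{G}\to\mathcal{V}_{\sigma\ell\mathbb{G}}$ (add $\bigvee^-$ as in (ii), identity on maps) are mutually inverse. In particular the category of Dedekind $\sigma$-complete $\ell$-groups is an infinitary variety.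
   Context: An $\ell$-group is Dedekind $\sigma$-complete if every countable subset with an upper bound has a least upper bound. An $\ell$-morphism is $\sigma$-continuous if it preserves all existing suprema of countable families. $\sigma\ell\mathbb{G}$ is the category of Dedekind $\sigma$-complete $\ell$-groups with $\sigma$-continuous $\ell$-morphisms. $\mathcal{V}_{\sigma\ell\mathbb{G}}$ is the infinitary variety of algebras $(G,0,+,-,\vee,\wedge,\bigvee^-)$ where $\bigvee^-$ has countably infinite arity, writing $\bigvee_{n\ge1}^g f_n:=\bigvee^-(g,f_1,f_2,\dots)$, satisfying the $\ell$-group axioms and the equations (A1) $\bigvee_{n\ge1}^g f_n=\bigvee_{n\ge1}^g(f_n\wedge g)$; (A2) $\bigvee_{n\ge1}^g f_n=(f_1\wedge g)\vee\bigvee_{n\ge2}^g f_n$ (where $\bigvee_{n\ge2}^g f_n:=\bigvee^-(g,f_2,f_3,\dots)$); (A3) $\bigvee_{n\ge1}^g(f_n\wedge h)\le h$ (an inequality $a\le b$ meaning the equation $a\wedge b=a$). Morphisms of $\mathcal{V}_{\sigma\ell\mathbb{G}}$ are maps preserving all these operations. *)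

From Stdlib Require Import Classical.

Record lsig := LSig {
  car :> Type;
  l0 : car;
  ladd : car -> car -> car;
  lopp : car -> car;
  ljoin : car -> car -> car;
  lmeet : car -> car -> car }.

Arguments l0 {_}.
Arguments ladd {_}.
Arguments lopp {_}.
Arguments ljoin {_}.
Arguments lmeet {_}.

Definition is_lgroup (G : lsig) : Prop :=
  (forall x y z : G, ladd x (ladd y z) = ladd (ladd x y) z) /\
  (forall x y : G, ladd x y = ladd y x) /\
  (forall x : G, ladd x l0 = x) /\
  (forall x : G, ladd x (lopp x) = l0) /\
  (forall x y z : G, ljoin x (ljoin y z) = ljoin (ljoin x y) z) /\
  (forall x y z : G, lmeet x (lmeet y z) = lmeet (lmeet x y) z) /\
  (forall x y : G, ljoin x y = ljoin y x) /\
  (forall x y : G, lmeet x y = lmeet y x) /\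
  (forall x y : G, ljoin x (lmeet x y) = x) /\
  (forall x y : G, lmeet x (ljoin x y) = x) /\
  (forall x y z : G, ladd x (ljoin y z) = ljoin (ladd x y) (ladd x z)).

Definition lle {G : lsig} (x y : G) : Prop := lmeet x y = x.

Definition is_sup {G : lsig} (f : nat -> G) (s : G) : Prop :=
  (forall n, lle (f n) s) /\ (forall u, (forall n, lle (f n) u) -> lle s u).

(* Dedekind sigma-completeness: every bounded-above countable (nonempty)
   family, presented as a sequence, has a least upper bound. *)
Definition dsigma_complete (G : lsig) : Prop :=
  forall f : nat -> G, (exists u, forall n, lle (f n) u) -> exists s, is_sup f s.

Definition is_lmorph {G H : lsig} (h : G -> H) : Prop :=
  h l0 = l0 /\
  (forall x y, h (ladd x y) = ladd (h x) (h y)) /\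
  (forall x, h (lopp x) = lopp (h x)) /\
  (forall x y, h (ljoin x y) = ljoin (h x) (h y)) /\
  (forall x y, h (lmeet x y) = lmeet (h x) (h y)).

Definition sigma_continuous {G H : lsig} (h : G -> H) : Prop :=
  forall (f : nat -> G) (s : G), is_sup f s -> is_sup (fun n => h (f n)) (h s).

(* The infinitary operation  \/^-(g, f_1, f_2, ...)  is encoded as
   bv g f with f 0 = f_1, f 1 = f_2, ... *)
Definition bigvee_op (G : lsig) := G -> (nat -> G) -> G.

Definition is_Vobj (G : lsig) (bv : bigvee_op G) : Prop :=
  is_lgroup G /\
  (* A1 *) (forall g f, bv g f = bv g (fun n => lmeet (f n) g)) /\
  (* A2 *) (forall g f, bv g f = ljoin (lmeet (f 0) g) (bv g (fun n => f (S n)))) /\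
  (* A3 *) (forall g h f, lle (bv g (fun n => lmeet (f n) h)) h).

Definition is_Vmorph {G H : lsig} (bvG : bigvee_op G) (bvH : bigvee_op H)
  (h : G -> H) : Prop :=
  is_lmorph h /\ (forall g f, h (bvG g f) = bvH (h g) (fun n => h (f n))).

Definition sup_bigvee (G : lsig) (bv : bigvee_op G) : Prop :=
  forall g f, is_sup (fun n => lmeet (f n) g) (bv g f).

(* The operation of an object of V is forced to be [bv g f = sup_n (f_n /\ g)]:
   (A2) unrolled n times shows that [bv g f] bounds every [f_n /\ g], and (A3)
   applied with [h] an upper bound [u] of the [f_n /\ g] (which (A1) lets us
   rewrite as [f_n /\ g /\ u]) shows it lies below [u].  A countable supremum [s] of [f] is [bv s f], since [f_n /\ s = f_n];
   so preserving [bv] and preserving countable suprema are equivalent for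
   l-morphisms. *)
From Stdlib Require Import ClassicalEpsilon FunctionalExtensionality.

Section LatticeOrder.

Variable G : lsig.
Hypothesis HG : is_lgroup G.

Lemma lmeetA (x y z : G) : lmeet x (lmeet y z) = lmeet (lmeet x y) z.
Proof. destruct HG as (_ & _ & _ & _ & _ & MA & _). apply MA. Qed.

Lemma ljoinC (x y : G) : ljoin x y = ljoin y x.
Proof. destruct HG as (_ & _ & _ & _ & _ & _ & JC & _). apply JC. Qed.

Lemma lmeetC (x y : G) : lmeet x y = lmeet y x.
Proof. destruct HG as (_ & _ & _ & _ & _ & _ & _ & MC & _). apply MC. Qed.

Lemma ljoinA (x y z : G) : ljoin x (ljoin y z) = ljoin (ljoin x y) z.
Proof. destruct HG as (_ & _ & _ & _ & JA & _). apply JA. Qed.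

Lemma ljoin_lmeet (x y : G) : ljoin x (lmeet x y) = x.
Proof. destruct HG as (_ & _ & _ & _ & _ & _ & _ & _ & JM & _). apply JM. Qed.

Lemma lmeet_ljoin (x y : G) : lmeet x (ljoin x y) = x.
Proof. destruct HG as (_ & _ & _ & _ & _ & _ & _ & _ & _ & MJ & _). apply MJ. Qed.

Lemma lmeetxx (x : G) : lmeet x x = x.
Proof. rewrite <- (ljoin_lmeet x x) at 2. apply lmeet_ljoin. Qed.

Lemma ljoinxx (x : G) : ljoin x x = x.
Proof. rewrite <- (lmeet_ljoin x x) at 2. apply ljoin_lmeet. Qed.

Lemma lle_ljoin (x y : G) : lle x y <-> ljoin x y = y.
Proof.
  unfold lle; split; intro E.
  - rewrite <- E, ljoinC, lmeetC. apply ljoin_lmeet.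
  - rewrite <- E. apply lmeet_ljoin.
Qed.

Lemma lle_trans (x y z : G) : lle x y -> lle y z -> lle x z.
Proof. unfold lle; intros Exy Eyz. rewrite <- Exy, <- lmeetA, Eyz. reflexivity. Qed.

Lemma lle_antisym (x y : G) : lle x y -> lle y x -> x = y.
Proof. unfold lle; intros Exy Eyx. rewrite <- Exy, lmeetC. exact Eyx. Qed.

Lemma lle_meetl (x y : G) : lle (lmeet x y) x.
Proof. unfold lle. rewrite <- lmeetA, (lmeetC y x), lmeetA, lmeetxx. reflexivity. Qed.

Lemma lle_meetr (x y : G) : lle (lmeet x y) y.
Proof. rewrite lmeetC. apply lle_meetl. Qed.

Lemma lle_joinl (x y : G) : lle x (ljoin x y).
Proof. apply lle_ljoin. rewrite ljoinA, ljoinxx. reflexivity. Qed.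

Lemma lle_joinr (x y : G) : lle y (ljoin x y).
Proof. rewrite ljoinC. apply lle_joinl. Qed.

Lemma ljoin_lub (x y u : G) : lle x u -> lle y u -> lle (ljoin x y) u.
Proof.
  rewrite !lle_ljoin; intros Exu Eyu.
  rewrite <- ljoinA, Eyu. exact Exu.
Qed.

Lemma is_sup_unique (f : nat -> G) (s t : G) : is_sup f s -> is_sup f t -> s = t.
Proof. intros [Us Ls] [Ut Lt]. apply lle_antisym; auto. Qed.

Lemma is_sup_shift (f : nat -> G) (s : G) :
  is_sup (fun n => f (S n)) s -> is_sup f (ljoin (f 0) s).
Proof.
  intros [Us Ls]; split.
  - intros [|n]; [apply lle_joinl|].
    apply lle_trans with s; [apply Us | apply lle_joinr].
  - intros u Hu. apply ljoin_lub; [apply Hu|]. apply Ls. intro n; apply Hu.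
Qed.

End LatticeOrder.

Lemma is_sup_ext (G : lsig) (f f' : nat -> G) (s : G) :
  (forall n, f n = f' n) -> is_sup f s -> is_sup f' s.
Proof.
  intros E [Us Ls]; split.
  - intro n; rewrite <- E; apply Us.
  - intros u Hu; apply Ls; intro n; rewrite E; apply Hu.
Qed.

Lemma sup_bigvee_bounded (G : lsig) (bv : bigvee_op G) (g : G) (f : nat -> G) :
  sup_bigvee G bv -> (forall n, lle (f n) g) -> is_sup f (bv g f).
Proof. intros Hbv Hf. apply (is_sup_ext G (fun n => lmeet (f n) g)); [exact Hf | apply Hbv]. Qed.

Lemma sup_bigvee_at_sup (G : lsig) (bv : bigvee_op G) (f : nat -> G) (s : G) :
  is_lgroup G -> sup_bigvee G bv -> is_sup f s -> bv s f = s.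
Proof.
  intros HG Hbv Hs. apply (is_sup_unique G HG f); [|exact Hs].
  apply sup_bigvee_bounded; [exact Hbv | apply Hs].
Qed.

Lemma Vobj_sup_bigvee (G : lsig) (bv : bigvee_op G) : is_Vobj G bv -> sup_bigvee G bv.
Proof.
  intros (HG & A1 & A2 & A3) g f; split.
  - intro n; revert f; induction n as [|n IH]; intro f; rewrite (A2 g f).
    + apply lle_joinl; exact HG.
    + apply lle_trans with (bv g (fun n => f (S n))); [exact HG | apply (IH (fun n => f (S n))) |].
      apply lle_joinr; exact HG.
  - intros u Hu. rewrite (A1 g f).
    replace (fun n => lmeet (f n) g) with (fun n => lmeet (lmeet (f n) g) u)
      by (apply functional_extensionality; intro n; apply Hu).
    apply A3.
Qed.

Lemma Vobj_dsigma_complete (G : lsig) (bv : bigvee_op G) :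
  is_Vobj G bv -> dsigma_complete G.
Proof.
  intros HV f [u Hu]. exists (bv u f).
  apply sup_bigvee_bounded; [apply Vobj_sup_bigvee, HV | exact Hu].
Qed.

Lemma Vmorph_sigma_continuous (G H : lsig) (bvG : bigvee_op G) (bvH : bigvee_op H)
    (h : G -> H) :
  is_lgroup G -> sup_bigvee G bvG -> sup_bigvee H bvH ->
  is_Vmorph bvG bvH h -> sigma_continuous h.
Proof.
  intros HG SG SH [(_ & _ & _ & _ & h_meet) h_bv] f s Hs.
  assert (h_s : bvH (h s) (fun n => h (f n)) = h s).
  { rewrite <- h_bv. f_equal. apply (sup_bigvee_at_sup G bvG f s HG SG Hs). }
  rewrite <- h_s.
  apply (is_sup_ext H (fun n => lmeet (h (f n)) (h s))); [|apply SH].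
  intro n. rewrite <- h_meet. f_equal. apply Hs.
Qed.

Lemma sup_bigvee_exists (G : lsig) :
  is_lgroup G -> dsigma_complete G -> exists bv : bigvee_op G, sup_bigvee G bv.
Proof.
  intros HG HC.
  assert (sup_meet : forall (g : G) (f : nat -> G),
             {s | is_sup (fun n => lmeet (f n) g) s}).
  { intros g f. apply constructive_indefinite_description, HC.
    exists g; intro n; apply lle_meetr; exact HG. }
  exists (fun g f => proj1_sig (sup_meet g f)).
  intros g f; exact (proj2_sig (sup_meet g f)).
Qed.

Lemma sup_bigvee_Vobj (G : lsig) (bv : bigvee_op G) :
  is_lgroup G -> sup_bigvee G bv -> is_Vobj G bv.
Proof.
  intros HG Hbv; split; [exact HG | split; [|split]].
  - intros g f. apply (is_sup_unique G HG (fun n => lmeet (f n) g)); [apply Hbv|].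
    apply (is_sup_ext G (fun n => lmeet (lmeet (f n) g) g)); [|apply Hbv].
    intro n. rewrite <- lmeetA, lmeetxx; auto.
  - intros g f. apply (is_sup_unique G HG (fun n => lmeet (f n) g)); [apply Hbv|].
    apply is_sup_shift; [exact HG | apply Hbv].
  - intros g h f. apply Hbv. intro n.
    apply lle_trans with (lmeet (f n) h); [exact HG | apply lle_meetl; exact HG |].
    apply lle_meetr; exact HG.
Qed.

Lemma sigma_continuous_Vmorph (G H : lsig) (bvG : bigvee_op G) (bvH : bigvee_op H)
    (h : G -> H) :
  is_lgroup H -> sup_bigvee G bvG -> sup_bigvee H bvH ->
  is_lmorph h -> sigma_continuous h -> is_Vmorph bvG bvH h.
Proof.
  intros HH SG SH Hm Hc; split; [exact Hm|].
  destruct Hm as (_ & _ & _ & _ & h_meet). intros g f.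
  apply (is_sup_unique H HH (fun n => lmeet (h (f n)) (h g))); [|apply SH].
  apply (is_sup_ext H (fun n => h (lmeet (f n) g))); [intro n; apply h_meet|].
  apply Hc, SG.
Qed.

Theorem mainTheorem1 :
  (* (i) objects of V give Dedekind sigma-complete l-groups *)
  (forall (G : lsig) (bv : bigvee_op G),
      is_Vobj G bv -> is_lgroup G /\ dsigma_complete G) /\
  (* (i) morphisms of V are sigma-continuous l-morphisms *)
  (forall (G H : lsig) (bvG : bigvee_op G) (bvH : bigvee_op H) (h : G -> H),
      is_Vobj G bvG -> is_Vobj H bvH -> is_Vmorph bvG bvH h ->
      is_lmorph h /\ sigma_continuous h) /\
  (* (ii) the supremum operation is well defined and makes G an object of V *)
  (forall G : lsig, is_lgroup G -> dsigma_complete G ->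
      (exists bv : bigvee_op G, sup_bigvee G bv) /\
      (forall bv : bigvee_op G, sup_bigvee G bv -> is_Vobj G bv)) /\
  (* (ii) sigma-continuous l-morphisms are morphisms of V *)
  (forall (G H : lsig) (bvG : bigvee_op G) (bvH : bigvee_op H) (h : G -> H),
      is_lgroup G -> dsigma_complete G -> is_lgroup H -> dsigma_complete H ->
      sup_bigvee G bvG -> sup_bigvee H bvH ->
      is_lmorph h -> sigma_continuous h -> is_Vmorph bvG bvH h) /\
  (* (iii) F o U = id: the operation of any V-object is the one of (ii)
     (U o F = id and the action on maps are identities by construction) *)
  (forall (G : lsig) (bv : bigvee_op G), is_Vobj G bv -> sup_bigvee G bv).
Proof.
  split; [|split; [|split; [|split]]].
  - intros G bv HV. split; [apply HV | exact (Vobj_dsigma_complete G bv HV)].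
  - intros G H bvG bvH h HVG HVH Hh. split; [apply Hh|].
    apply (Vmorph_sigma_continuous G H bvG bvH);
      [apply HVG | apply Vobj_sup_bigvee, HVG | apply Vobj_sup_bigvee, HVH | exact Hh].
  - intros G HG HC. split; [exact (sup_bigvee_exists G HG HC)|].
    intros bv; apply sup_bigvee_Vobj; exact HG.
  - intros G H bvG bvH h _ _ HH _. apply sigma_continuous_Vmorph; exact HH.
  - exact Vobj_sup_bigvee.
Qed.
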